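(* Let $(A,P)$ be a $TD$-algebra and let $A_P$ be the vector space $A$ equipped with the (associative) product $a*_P b:=P(a)b+aP(b)-a\,P(1_A)\,b$. Then $P$ is a Nijenhuis operator for $*_P$, i.e. $P(a)*_P P(b)=P\bigl(P(a)*_P b+a*_P P(b)\bigr)-P^2(a*_P b)$ for all $a,b\in A$.
   Context: $\mathbb{K}$ is a field of characteristic $0$; algebras are associative unital $\mathbb{K}$-algebras (not necessarily commutative). A $TD$-algebra is a pair $(A,P)$ with $P:A\to A$ a $\mathbb{K}$-linear map satisfying the $TD$-relation $P(x)P(y)=P\bigl(P(x)y+xP(y)\bigr)-P\bigl(x\,P(1_A)\,y\bigr)$ for all $x,y\in A$. *)

From HB Require Import structures.
From mathcomp Require Import all_boot all_order all_algebra.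
Set Implicit Arguments. Unset Strict Implicit. Unset Printing Implicit Defensive.
Import GRing.Theory.
Local Open Scope ring_scope.

Definition TD_relation (K : fieldType) (A : algType K) (P : {linear A -> A}) :=
  forall x y : A, P x * P y = P (P x * y + x * P y) - P (x * P 1 * y).

Definition starP (K : fieldType) (A : algType K) (P : {linear A -> A}) (a b : A) : A :=
  P a * b + a * P b - a * P 1 * b.

From HB Require Import structures.
From mathcomp Require Import all_boot all_order all_algebra.
Local Open Scope ring_scope.
Import GRing.Theory.

(* The TD-relation says exactly that P is an algebra morphism from A_P to A,
   and with y = 1 it gives P(x) P(1) = P(P(x)).  Hence P(a) *_P P(b) collapses
   to P(a) P(P(b)), while the right-hand side becomes
   P(P a) P(b) + P(a) P(P b) - P(P(a) P(b)), in which the outer terms cancel. *)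

Section TDAlgebra.

Variables (K : fieldType) (A : algType K) (P : {linear A -> A}).
Hypothesis HTD : TD_relation P.

Lemma TD_mulP1 (x : A) : P x * P 1 = P (P x).
Proof. by rewrite HTD !mulr1 linearD addrK. Qed.

Lemma TD_starP_morph (a b : A) : P (starP P a b) = P a * P b.
Proof. by rewrite /starP linearB /= HTD. Qed.

Lemma TD_PmulP (x y : A) : P (P x * P y) = P (P x) * P y.
Proof. by rewrite [RHS]HTD TD_mulP1 linearD addrC addKr. Qed.

Lemma TD_starP_PP (a b : A) : starP P (P a) (P b) = P a * P (P b).
Proof. by rewrite /starP TD_mulP1 addrC addKr. Qed.

End TDAlgebra.

Theorem proposition3p5 (K : fieldType) (charK0 : [pchar K] =i pred0)
  (A : algType K) (P : {linear A -> A}) (HTD : TD_relation P) :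
  forall a b : A,
    starP P (P a) (P b) =
    P (starP P (P a) b + starP P a (P b)) - P (P (starP P a b)).
Proof.
move=> a b.
rewrite TD_starP_PP // linearD /= !TD_starP_morph // TD_PmulP //.
by rewrite addrC addKr.
Qed.
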